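(* Let $T>0$ and constants $K_1\ge0$, $K_2\ne0$ with $K_1+K_2\ge0$. For $t\in[0,T]$ let $$\Lambda(t,T)=1+\frac{K_1}{K_2}\Big(1-e^{-\frac{K_2(T-t)}{2}}\Big)+\frac{K_1}{K_2}\Big(1-e^{-\frac{K_2t}{2}}\Big)+\Big(\frac{K_1}{K_2}\Big)^2\Big[\Big(1-e^{-\frac{K_2t}{2}}\Big)+\frac12\Big(e^{-\frac{K_2(T+t)}{2}}-e^{-\frac{K_2(T-t)}{2}}\Big)\Big].$$ (i) If $K_2<0$, then $t\mapsto\Lambda(t,T)$ is strictly increasing on $[0,T]$. (ii) If $K_2>0$, then the maximum of $t\mapsto\Lambda(t,T)$ over $[0,T]$ is attained at a point $t_0\in(0,T)$. *)

From Stdlib Require Import Reals.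
Open Scope R_scope.

Definition Lambda (K1 K2 T t : R) : R :=
  let c := K1 / K2 in
  1 + c * (1 - exp (- (K2 * (T - t) / 2)))
    + c * (1 - exp (- (K2 * t / 2)))
    + c ^ 2 * ((1 - exp (- (K2 * t / 2)))
               + / 2 * (exp (- (K2 * (T + t) / 2)) - exp (- (K2 * (T - t) / 2)))).

(* Write [a = exp (-K2 t/2)], [b = exp (-K2 (T-t)/2)] and [m = K1/K2]. Since
   [exp (-K2 (T+t)/2) = a^2 b], the derivative of [Lambda] is
   [K1/2 * (a - b + m a - m/2 (a^2 b + b))], a polynomial in [a], [b], [m].
   For [K2 < 0] we have [m <= -1], [a > 1], [b >= 1], and the polynomial is
   positive, so [Lambda] increases. For [K2 > 0] (and [K1 > 0]) the
   derivative is positive at [t = 0] and negative at [t = T], so the maximum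
   of the continuous function [Lambda] on [[0, T]] lies strictly inside. *)

From Stdlib Require Import Reals Lra Psatz.
From Coquelicot Require Import Coquelicot.
Open Scope R_scope.

Lemma derivable_pt_lim_local_sign f x l :
  derivable_pt_lim f x l -> l <> 0 ->
  exists d : posreal, forall h, h <> 0 -> Rabs h < d -> 0 < l * h ->
    f x < f (x + h).
Proof.
  intros Hf hl.
  assert (hl2 : 0 < Rabs l / 2) by (pose proof (Rabs_pos_lt l hl); lra).
  destruct (Hf _ hl2) as [d Hd]; exists d; intros h h0 hd hlh.
  specialize (Hd h h0 hd).
  set (q := (f (x + h) - f x) / h) in Hd.
  assert (Hfq : f (x + h) - f x = q * h) by (unfold q; field; exact h0).
  assert (hql : 0 < q * l).
  { apply Rabs_def2 in Hd; destruct (Rle_or_lt 0 l) as [hp | hn].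
    - rewrite Rabs_right in Hd by lra; nra.
    - rewrite Rabs_left in Hd by lra; nra. }
  assert (0 < (q * h) * (l * l)) by nra.
  nra.
Qed.

Lemma argmax_interior f f' a b :
  a < b -> (forall x, derivable_pt_lim f x (f' x)) -> 0 < f' a -> f' b < 0 ->
  exists c, a < c < b /\ forall x, a <= x <= b -> f x <= f c.
Proof.
  intros hab Hf ha hb.
  destruct (continuity_ab_maj f a b) as [c [Hc Hcab]]; [lra | |].
  { intros x _; apply derivable_continuous_pt; exists (f' x); apply Hf. }
  exists c; split; [|exact Hc].
  destruct (derivable_pt_lim_local_sign f a (f' a) (Hf a)) as [da Hda]; [lra|].
  destruct (derivable_pt_lim_local_sign f b (f' b) (Hf b)) as [db Hdb]; [lra|].
  pose proof (Rmin_l da db); pose proof (Rmin_r da db).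
  pose proof (Rmin_l (Rmin da db / 2) ((b - a) / 2)).
  pose proof (Rmin_r (Rmin da db / 2) ((b - a) / 2)).
  assert (0 < Rmin da db) by (apply Rmin_pos; apply cond_pos).
  set (h := Rmin (Rmin da db / 2) ((b - a) / 2)) in *.
  assert (0 < h) by (apply Rmin_pos; lra).
  split.
  - destruct (Req_dec c a) as [-> | hca]; [| lra].
    specialize (Hda h ltac:(lra) ltac:(rewrite Rabs_right; lra) ltac:(nra)).
    specialize (Hc (a + h) ltac:(lra)); lra.
  - destruct (Req_dec c b) as [-> | hcb]; [| lra].
    specialize (Hdb (- h) ltac:(lra) ltac:(rewrite Rabs_left; lra) ltac:(nra)).
    specialize (Hc (b + - h) ltac:(lra)); lra.
Qed.

Lemma derivative_pos_strict_increasing f f' a b :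
  (forall x, derivable_pt_lim f x (f' x)) -> (forall x, a < x < b -> 0 < f' x) ->
  forall s t, a <= s -> s < t -> t <= b -> f s < f t.
Proof.
  intros Hf Hpos s t hs hst htb.
  destruct (MVT_cor2 f f' s t hst) as [c [Hc hc]]; [intros; apply Hf|].
  specialize (Hpos c ltac:(lra)); nra.
Qed.

Definition Lambda_slope (m a b : R) : R := a - b + m * a - m / 2 * (a * a * b + b).

Lemma Lambda_derivative K1 K2 T t : K2 <> 0 ->
  derivable_pt_lim (Lambda K1 K2 T) t
    (K1 / 2 * Lambda_slope (K1 / K2) (exp (- (K2 * t / 2))) (exp (- (K2 * (T - t) / 2)))).
Proof.
  intros hK2.
  assert (e : exp (- (K2 * (T + t) / 2))
              = exp (- (K2 * t / 2)) * exp (- (K2 * t / 2)) * exp (- (K2 * (T - t) / 2))).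
  { rewrite <- !exp_plus; f_equal; field. }
  apply is_derive_Reals; unfold Lambda, Lambda_slope.
  auto_derive; [easy|].
  unfold Rminus, Rdiv in *; rewrite e; field; exact hK2.
Qed.

Lemma Lambda_slope_pos m a b : m <= -1 -> 1 < a -> 1 <= b -> 0 < Lambda_slope m a b.
Proof.
  intros hm ha hb; unfold Lambda_slope.
  assert (0 < b * (a * a - 1)) by (apply Rmult_lt_0_compat; nra).
  assert (0 <= (- m - 1) * ((b - 1) * (a * a + 1) + (a - 1) * (a - 1)))
    by (apply Rmult_le_pos; nra).
  nra.
Qed.

Lemma Lambda_slope_left m b : 0 < m -> b < 1 -> 0 < Lambda_slope m 1 b.
Proof. intros hm hb; unfold Lambda_slope; nra. Qed.

Lemma Lambda_slope_right m a : 0 <= m -> a < 1 -> Lambda_slope m a 1 < 0.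
Proof.
  intros hm ha.
  replace (Lambda_slope m a 1) with ((a - 1) - m / 2 * ((a - 1) * (a - 1)))
    by (unfold Lambda_slope; field).
  assert (0 <= m / 2 * ((a - 1) * (a - 1))) by (apply Rmult_le_pos; nra).
  lra.
Qed.

Lemma Lambda_K1_0 K2 T t : K2 <> 0 -> Lambda 0 K2 T t = 1.
Proof. intros hK2; unfold Lambda; replace (0 / K2) with 0 by (field; exact hK2); ring. Qed.

Theorem proposition1 (T K1 K2 : R) (hT : 0 < T) (hK1 : 0 <= K1) (hK2 : K2 <> 0)
  (hK12 : 0 <= K1 + K2) :
  (K2 < 0 ->
     forall s t, 0 <= s -> s < t -> t <= T -> Lambda K1 K2 T s < Lambda K1 K2 T t) /\
  (0 < K2 ->
     exists t0, 0 < t0 /\ t0 < T /\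
       forall t, 0 <= t -> t <= T -> Lambda K1 K2 T t <= Lambda K1 K2 T t0).
Proof.
  pose proof (fun t => Lambda_derivative K1 K2 T t hK2) as HD.
  split.
  - intros hneg; apply (derivative_pos_strict_increasing _ _ 0 T HD); intros t ht.
    assert (hm : K1 / K2 <= -1).
    { assert (K1 / K2 * K2 = K1) by (field; exact hK2). nra. }
    pose proof (exp_ineq1_le (- (K2 * t / 2))).
    pose proof (exp_ineq1_le (- (K2 * (T - t) / 2))).
    apply Rmult_lt_0_compat; [lra|].
    apply Lambda_slope_pos; [exact hm | nra | nra].
  - intros hpos; destruct (Req_dec K1 0) as [-> | hK1n].
    { exists (T / 2); repeat split; try lra.
      intros; rewrite !Lambda_K1_0 by exact hK2; lra. }
    assert (hm : 0 < K1 / K2) by (apply Rdiv_lt_0_compat; lra).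
    assert (hE : exp (- (K2 * T / 2)) < 1)
      by (rewrite <- exp_0; apply exp_increasing; nra).
    destruct (argmax_interior _ _ 0 T hT HD) as [t0 [ht0 Hmax]].
    + apply Rmult_lt_0_compat; [lra|].
      rewrite Rmult_0_r, Rdiv_0_l, Ropp_0, exp_0, Rminus_0_r.
      apply Lambda_slope_left; assumption.
    + rewrite Rminus_diag, Rmult_0_r, Rdiv_0_l, Ropp_0, exp_0.
      pose proof (Lambda_slope_right _ _ (Rlt_le _ _ hm) hE); nra.
    + exists t0; repeat split; try lra.
      intros t h0 hT'; apply Hmax; lra.
Qed.
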